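(* In the online tolling setting described in the context, let $\bm{\pi}$ be any tolling policy producing nonnegative tolls $\boldsymbol{\tau}^{(t)}$, $t\in[T]$, and let $\bm{x}^t$ be the edge flows of the resulting equilibria. Then $$R_T(\bm{\pi})\le\mathbb{E}\Big[\sum_{t=1}^T\boldsymbol{\tau}^{(t)}\cdot(\bm{c}-\bm{x}^t)\Big].$$
   Context: Network: directed graph $G=(V,E)$, edge capacities $\bm{c}=\{c_e\}$, fixed edge travel times $l_e$, $l_P=\sum_{e\in P}l_e$. Finite user set $\mathcal{U}$; user $u$ has fixed outside-option cost $\lambda_u$. In each period $t=1,\dots,T$, O-D pairs $w^t_u$ and values of time $v^t_u\ge0$ are drawn i.i.d. across periods from a distribution $\mathcal{D}$; $\mathcal{P}^t_u$ is the finite set of paths for $w^t_u$. Given tolls $\boldsymbol{\tau}^{(t)}$, the period-$t$ equilibrium assigns each user to a path $P\in\mathcal{P}^t_u$ or the outside option so as to minimize cost ($v^t_ul_P+\sum_{e\in P}\tau^{(t)}_e$ for a path, $\lambda_u$ for the outside option; capacities need not be respected), encoded by binary $f^t_{P,u},f^t_{o,u}$, with edge flows $x^t_e=\sum_u\sum_{P\in\mathcal{P}^t_u:e\in P}f^t_{P,u}$. A tolling policy chooses $\boldsymbol{\tau}^{(t)}$ as a function of $\bm{x}^1,\dots,\bm{x}^{t-1}$. Let $U_t=\sum_u(v^t_u\sum_Pl_Pf^t_{P,u}+\lambda_uf^t_{o,u})$ and $U^*_t$ be the minimum of this objective over binary assignments (each user exactly one path or the outside option) satisfying $\sum_u\sum_{P\ni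 e}f_{P,u}\le c_e$ for all $e$. Regret: $R_T(\bm{\pi})=\mathbb{E}[\sum_{t=1}^T(U_t-U^*_t)]$, expectation over $\mathcal{D}$. *)

From HB Require Import structures.
From mathcomp Require Import all_boot all_order all_algebra.
From mathcomp Require Import all_classical all_reals all_analysis.
Set Implicit Arguments. Unset Strict Implicit. Unset Printing Implicit Defensive.
Import Order.TTheory GRing.Theory Num.Theory.
Local Open Scope classical_set_scope.
Local Open Scope ring_scope.

Section Network.
Variables (V E : finType) (src tgt : E -> V).

Fixpoint is_walk (o d : V) (s : seq E) : bool :=
  match s with
  | [::] => o == d
  | e :: s' => (src e == o) && is_walk (tgt e) d s'
  end.

Definition is_path (o d : V) (s : seq E) : bool :=
  is_walk o d s && uniq (o :: map tgt s).

(* an option of a user with O-D pair w: [Some P] = path P in P_w,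
   [None] = outside option *)
Definition option_valid (w : V * V) (o : option (seq E)) : bool :=
  if o is Some P then is_path w.1 w.2 P else true.
End Network.

Section Tolling.
Variable R : realType.
Variables (V E U : finType) (src tgt : E -> V).
Variables (l : E -> R)
          (lam : U -> R).
(* Per-period type profiles: an abstract measurable space Theta; a profile
   th gives each user an O-D pair [od th u] and a value of time [vot th u]. *)
Variables (d : measure_display) (Theta : measurableType d)
          (od : Theta -> U -> V * V) (vot : Theta -> U -> R).

Definition assignment := U -> option (seq E).

Definition valid_assignment (th : Theta) (f : assignment) : Prop :=
  forall u, option_valid src tgt (od th u) (f u).

Definition path_len (P : seq E) : R := \sum_(e <- P) l e.

Definition user_cost (th : Theta) (tau : E -> R) (u : U) (o : option (seq E)) : R :=
  match o with
  | None => lam u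
  | Some P => vot th u * path_len P + \sum_(e <- P) tau e
  end.

Definition is_equilibrium (th : Theta) (tau : E -> R) (f : assignment) : Prop :=
  valid_assignment th f /\
  forall u o, option_valid src tgt (od th u) o ->
    user_cost th tau u (f u) <= user_cost th tau u o.

Definition edge_flow (f : assignment) (e : E) : R :=
  \sum_(u : U) (if f u is Some P then (e \in P)%:R else 0).

Definition social_cost (th : Theta) (f : assignment) : R :=
  \sum_(u : U) (if f u is Some P then vot th u * path_len P else lam u).

Definition Ustar (c : E -> R) (th : Theta) : \bar R :=
  ereal_inf [set (social_cost th f)%:E | f in
    [set f | valid_assignment th f /\ forall e, edge_flow f e <= c e]].

(* Online process. Periods t = 0,...,T-1 (paper's t = 1,...,T).        *)
(* pol t h : tolls of period t as a function of the list h of past     *)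
(*           edge-flow vectors [x^1; ...; x^{t-1}];                    *)
(* sel t th tau : the equilibrium reached in period t (selection).     *)
Variables (dO : measure_display) (Omega : measurableType dO).
Variables (pol : nat -> seq (E -> R) -> (E -> R))
          (sel : nat -> Theta -> (E -> R) -> assignment)
          (theta : nat -> Omega -> Theta).

Fixpoint flow_hist (om : Omega) (n : nat) : seq (E -> R) :=
  if n is n'.+1 then
    let h := flow_hist om n' in
    rcons h (edge_flow (sel n' (theta n' om) (pol n' h)))
  else [::].

Definition tolls (t : nat) (om : Omega) : E -> R := pol t (flow_hist om t).
Definition assign (t : nat) (om : Omega) : assignment :=
  sel t (theta t om) (tolls t om).
Definition flows (t : nat) (om : Omega) : E -> R := edge_flow (assign t om).

Definition iid (P : probability Omega R) : Prop :=
  (forall t, measurable_fun setT (theta t)) /\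
  (forall t (A : set Theta), measurable A ->
     P (theta t @^-1` A) = P (theta 0 @^-1` A)) /\
  (forall (I : seq nat) (A : nat -> set Theta), uniq I ->
     (forall i, measurable (A i)) ->
     P (\bigcap_(i in [set` I]) (theta i @^-1` A i)) =
       (\prod_(i <- I) P (theta i @^-1` A i))%E).

Definition regret (P : probability Omega R) (c : E -> R) (T : nat) : \bar R :=
  (\int[P]_om (\sum_(t < T)
      ((social_cost (theta t om) (assign t om))%:E - Ustar c (theta t om))))%E.

Definition toll_slack (P : probability Omega R) (c : E -> R) (T : nat) : \bar R :=
  (\int[P]_om (\sum_(t < T) \sum_(e : E) tolls t om e * (c e - flows t om e))%:E)%E.

End Tolling.

(* Under the tolls tau the equilibrium f minimises every user's generalised
   cost, so its total generalised cost is at most that of a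
   capacity-feasible optimum g.  Total generalised cost is social cost plus
   the tolls collected, tau . x, and g collects at most tau . c because the
   tolls are nonnegative; hence social_cost f - social_cost g <= tau . (c - x).
   The bound holds for every period and every sample, so it survives taking
   the infimum over g, summing over periods and integrating; neither the
   i.i.d. assumption nor the sign of the values of time is needed. *)

From HB Require Import structures.
From mathcomp Require Import all_boot all_order all_algebra.
From mathcomp Require Import all_classical all_reals all_analysis.
From mathcomp Require Import lra.
Set Implicit Arguments. Unset Strict Implicit. Unset Printing Implicit Defensive.
Import Order.TTheory GRing.Theory Num.Theory.
Local Open Scope ring_scope.

Lemma big_uniq_indicator (R : nmodType) (I : finType) (s : seq I) (F : I -> R) :
  uniq s -> \sum_(i <- s) F i = \sum_i F i *+ (i \in s).
Proof.
by move=> us; rewrite big_uniq // big_mkcond; under [RHS]eq_bigr do rewrite mulrb.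
Qed.

(* No measurability is needed: both the positive and the negative part of the
   integral are suprema over simple functions below a monotone bound. *)
Lemma le_integral_pointwise (d : measure_display) (T : measurableType d)
    (R : realType) (mu : set T -> \bar R) (D : set T) (f g : T -> \bar R) :
  {in D, forall x, (f x <= g x)%E} ->
  (\int[mu]_(x in D) f x <= \int[mu]_(x in D) g x)%E.
Proof.
move=> fg; rewrite /integral.
have fgD : {in setT, forall x, ((f \_ D) x <= (g \_ D) x)%E}.
  by move=> x _; rewrite /patch; case: ifPn => // /fg.
apply: leeB; apply: ereal_sup_le => _ [h /= hf <-]; exists h => //= x.
- by apply: le_trans (hf x) _; apply: (funepos_le fgD); exact: in_setT.
- by apply: le_trans (hf x) _; apply: (funeneg_le fgD); exact: in_setT.
Qed.

Section OnePeriod.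
Variables (R : realType) (V E U : finType) (src tgt : E -> V)
  (l : E -> R) (lam : U -> R) (d : measure_display) (Theta : measurableType d)
  (od : Theta -> U -> V * V) (vot : Theta -> U -> R).

Definition option_toll (tau : E -> R) (o : option (seq E)) : R :=
  if o is Some P then \sum_(e <- P) tau e else 0.

Lemma user_costE th tau u o :
  user_cost l lam vot th tau u o =
  (if o is Some P then vot th u * path_len l P else lam u) + option_toll tau o.
Proof. by case: o => [P|] /=; rewrite ?addr0. Qed.

Lemma valid_assignment_uniq th (f : assignment E U) u P :
  valid_assignment src tgt od th f -> f u = Some P -> uniq P.
Proof.
by move=> /(_ u) + fuP; rewrite fuP => /andP[_ /= /andP[_ /map_uniq]].
Qed.

Lemma sum_option_toll th tau (f : assignment E U) :
  valid_assignment src tgt od th f ->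
  \sum_u option_toll tau (f u) = \sum_e tau e * edge_flow R f e.
Proof.
move=> vf; rewrite /edge_flow.
under [RHS]eq_bigr do rewrite mulr_sumr.
rewrite exchange_big /=; apply: eq_bigr => u _.
case fuP: (f u) => [P|] /=; last by rewrite big1 // => e _; rewrite mulr0.
rewrite big_uniq_indicator; last exact: valid_assignment_uniq fuP.
by apply: eq_bigr => e _; rewrite mulr_natr.
Qed.

Lemma equilibrium_cost_gap th tau (f g : assignment E U) (c : E -> R) :
  (forall e, 0 <= tau e) ->
  is_equilibrium src tgt l lam od vot th tau f ->
  valid_assignment src tgt od th g -> (forall e, edge_flow R g e <= c e) ->
  social_cost l lam vot th f - social_cost l lam vot th g <=
  \sum_e tau e * (c e - edge_flow R f e).
Proof.
move=> tau_ge0 [vf f_best] vg g_cap.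
have generalised_cost_le : \sum_u user_cost l lam vot th tau u (f u) <=
                           \sum_u user_cost l lam vot th tau u (g u).
  by apply: ler_sum => u _; apply: f_best; exact: vg.
have g_toll_le : \sum_e tau e * edge_flow R g e <= \sum_e tau e * c e.
  by apply: ler_sum => e _; apply: ler_wpM2l.
have slackE : \sum_e tau e * (c e - edge_flow R f e) =
              \sum_e tau e * c e - \sum_e tau e * edge_flow R f e.
  by rewrite -sumrB; apply: eq_bigr => e _; rewrite mulrBr.
move: generalised_cost_le.
under eq_bigr do rewrite user_costE.
under [X in _ <= X]eq_bigr do rewrite user_costE.
rewrite !big_split /= (sum_option_toll tau vf) (sum_option_toll tau vg).
rewrite -/(social_cost l lam vot th f) -/(social_cost l lam vot th g) slackE.
lra.
Qed.

Lemma social_cost_sub_Ustar th tau (f : assignment E U) (c : E -> R) :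
  (forall e, 0 <= tau e) ->
  is_equilibrium src tgt l lam od vot th tau f ->
  ((social_cost l lam vot th f)%:E - Ustar src tgt l lam od vot c th <=
   (\sum_e tau e * (c e - edge_flow R f e))%:E)%E.
Proof.
move=> tau_ge0 f_eq.
set a := social_cost _ _ _ _ _; set b := \sum_e _.
have gap_le_Ustar : ((a - b)%:E <= Ustar src tgt l lam od vot c th)%E.
  apply/ereal_infP => _ [g [vg g_cap] <-]; rewrite lee_fin.
  have := equilibrium_cost_gap tau_ge0 f_eq vg g_cap; rewrite -/a -/b; lra.
move: gap_le_Ustar; case: (Ustar _ _ _ _ _ _ _ _) => [r||] //=.
- by rewrite !lee_fin; lra.
- by rewrite leNye.
Qed.

End OnePeriod.

Theorem lemma1 (R : realType) (V E U : finType) (src tgt : E -> V)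
  (c : E -> R) (l : E -> R) (lam : U -> R)
  (d : measure_display) (Theta : measurableType d)
  (od : Theta -> U -> V * V) (vot : Theta -> U -> R)
  (dO : measure_display) (Omega : measurableType dO) (P : probability Omega R)
  (theta : nat -> Omega -> Theta)
  (pol : nat -> seq (E -> R) -> (E -> R))
  (sel : nat -> Theta -> (E -> R) -> assignment E U)
  (T : nat) :
  (forall th u, 0 <= vot th u) ->
  iid theta P ->
  (forall t h e, 0 <= pol t h e) ->
  (forall t th tau, is_equilibrium src tgt l lam od vot th tau (sel t th tau)) ->
  (regret src tgt l lam od vot pol sel theta P c T
     <= toll_slack pol sel theta P c T)%E.
Proof.
move=> _ _ pol_ge0 sel_eq; apply: le_integral_pointwise => om _.
rewrite -sumEFin; apply: lee_sum => t _.
exact: social_cost_sub_Ustar (fun e => pol_ge0 _ _ e) (sel_eq _ _ _).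
Qed.
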